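(* Let $\{(U_{k,i}, V_{k,i}); i \geq 1, k \geq 1\}$ be an array of i.i.d. two-dimensional random vectors. Let $\{a_n; n \geq 1\}$ be a nondecreasing sequence of positive constants such that $$\lim_{n \to \infty} a_{n+1}/a_n = 1 \quad \text{and} \quad \liminf_{n \to \infty} a_{2n}/a_n = b \in (1, \infty].$$ Then for every $c > 0$ and $q > 1$ the following three statements are equivalent: (1) $\sum_{n=1}^{\infty} P\big(\max_{1 \leq i \neq j \leq n} |U_{1,i} V_{1,j}| \geq a_n\big) < \infty$; (2) $\sum_{n=1}^{\infty} P\big(\max_{1 \leq i \neq j \leq cn} |U_{1,i} V_{1,j}| \geq \varepsilon a_n\big) < \infty$ for all $\varepsilon > 0$; (3) $\sum_{n=1}^{\infty} P\big(\max_{1 \leq m \leq q^n} \max_{1 \leq i \neq j \leq cm} |U_{m,i} V_{m,j}| \geq \varepsilon a_{[q^n]}\big) < \infty$ for all $\varepsilon > 0$.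
   Context: $[x]$ denotes the integer part of $x$. *)

From HB Require Import structures.
From mathcomp Require Import all_boot all_order all_algebra.
From mathcomp Require Import all_classical all_reals all_analysis.
Set Implicit Arguments. Unset Strict Implicit. Unset Printing Implicit Defensive.
Import Order.TTheory GRing.Theory Num.Theory.
Local Open Scope classical_set_scope.
Local Open Scope ring_scope.

Definition rvec {T R : Type} (U V : nat -> nat -> T -> R) (t : nat * nat)
  : T -> R * R := fun w => (U t.1 t.2 w, V t.1 t.2 w).

(* {(U_{k,i},V_{k,i}); i >= 1, k >= 1} is an array of i.i.d. two-dimensional
   random vectors: each component is a real random variable, the vectors
   indexed by (k,i) with k,i >= 1 are mutually independent (product rule over
   every finite subfamily and every Borel sets of R^2) and all have the same
   law on R^2. *)
Definition iid_array {d : measure_display} {T : measurableType d}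
  {R : realType} (P : probability T R) (U V : nat -> nat -> T -> R) : Prop :=
  [/\ (forall k i, measurable_fun setT (U k i) /\ measurable_fun setT (V k i)),
      (forall (s : seq (nat * nat)) (A : nat * nat -> set (R * R)),
          uniq s ->
          (forall t, t \in s -> (0 < t.1)%N /\ (0 < t.2)%N /\ measurable (A t)) ->
          P (\bigcap_(t in [set` s]) (rvec U V t @^-1` A t)) =
          \big[*%E/1%E]_(t <- s) P (rvec U V t @^-1` A t)) &
      (forall (t t' : nat * nat) (A : set (R * R)),
          (0 < t.1)%N -> (0 < t.2)%N -> (0 < t'.1)%N -> (0 < t'.2)%N ->
          measurable A ->
          P (rvec U V t @^-1` A) = P (rvec U V t' @^-1` A))].

From HB Require Import structures.
From mathcomp Require Import all_boot all_order all_algebra.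
From mathcomp Require Import all_classical all_reals all_analysis.
From mathcomp Require Import zify ring lra.
Import Order.TTheory GRing.Theory Num.Theory.
Import numFieldNormedType.Exports.
Local Open Scope classical_set_scope.
Local Open Scope ring_scope.

(* Write p(K, x) for P(max_{1 <= i <> j <= K} |U_{1,i} V_{1,j}| >= x).  Two facts about the
   array drive the proof.  First, two indices of [1, 4L] always lie in the union of two of
   the four blocks of length L, and by identical distribution each such union behaves like
   [1, 2L]; hence p(4L, x) <= 6 p(2L, x), and p(K', x) <= 6^(j+1) p(K, x) whenever
   K' <= 2^j K.  Second, distinct rows are independent, so the probability that one of D
   rows of length K exceeds x is 1 - (1 - p(K, x))^D >= D p / (1 + D p).
   Since liminf a_{2n} / a_n > 1, the first fact turns changes of the scale c and of the
   level eps into constant factors, which gives (1) <=> (2).  For (2) <=> (3) the indices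
   are grouped into the blocks [q^n, q^(n+1)), whose lengths are comparable to q^n: the
   union bound over rows gives (2) => (3), and the second fact gives the converse. *)

(** * Real inequalities and series *)

Section real_inequalities.
Context {R : realFieldType}.

Lemma bernoulli_ineq (p : R) (D : nat) : 0 <= p -> 1 + D%:R * p <= (1 + p) ^+ D.
Proof.
move=> p0; elim: D => [|D IH]; first by rewrite mul0r addr0 expr0.
rewrite exprS; apply: le_trans (ler_wpM2l _ IH); last by rewrite addr_ge0.
have : 0 <= p * (D%:R * p) by rewrite !mulr_ge0.
rewrite -natr1; lra.
Qed.

Lemma one_sub_expr_ge {p : R} {D : nat} : 0 <= p <= 1 ->
  D%:R * p / (1 + D%:R * p) <= 1 - (1 - p) ^+ D.
Proof.
move=> /andP[p0 p1].
have Dp0 : 0 <= D%:R * p by apply: mulr_ge0.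
have Dp1_gt0 : 0 < 1 + D%:R * p by lra.
have : (1 - p) ^+ D * (1 + D%:R * p) <= 1.
  apply: (@le_trans _ _ ((1 - p) ^+ D * (1 + p) ^+ D)).
    by apply: ler_wpM2l; [rewrite exprn_ge0 ?subr_ge0|exact: bernoulli_ineq].
  rewrite -exprMn; apply: exprn_ile1; nra.
rewrite -ler_pdivlMr // => h.
have -> : D%:R * p / (1 + D%:R * p) = 1 - 1 / (1 + D%:R * p) by field; lra.
by rewrite lerD2l lerN2.
Qed.

End real_inequalities.

Lemma exprn_unbounded {R : archiRealFieldType} {b : R} : 1 < b ->
  forall X : R, exists n0, forall n, (n0 <= n)%N -> X <= b ^+ n.
Proof.
move=> b1 X; exists (Num.truncn (`|X| / (b - 1))).+1 => n n0n.
have b0 : 0 < b - 1 by lra.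
have : `|X| / (b - 1) < n%:R.
  apply: lt_le_trans (truncnS_gt _) _; by rewrite ler_nat.
rewrite ltr_pdivrMr // => Xn.
have := @bernoulli_ineq _ (b - 1) n (ltW b0); rewrite (addrC 1 (b - 1)) subrK.
have := ler_norm X; have : 0 <= n%:R * (b - 1) by rewrite mulr_ge0 // ltW.
lra.
Qed.

Section bounded_partial_sums.
Context {R : realType}.
Implicit Types (f g u t : nat -> R).

(* For nonnegative terms this is convergence of the series, stated without extended reals. *)
Definition psum_bounded f := exists M, forall N, \sum_(0 <= n < N) f n <= M.

Lemma le_psum {f} {N N'} : (forall n, 0 <= f n) -> (N <= N')%N ->
  \sum_(0 <= n < N) f n <= \sum_(0 <= n < N') f n.
Proof.
move=> f0 NN'; rewrite (big_cat_nat (leq0n N) NN') /= lerDl.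
by apply: sumr_ge0 => n _.
Qed.

Lemma nneseries_lty_psum_bounded f : (forall n, 0 <= f n) ->
  (\sum_(1 <= n <oo) (f n)%:E < +oo)%E <-> psum_bounded f.
Proof.
move=> f0; split => [|[M fM]].
  set S := (\sum_(1 <= n <oo) _)%E => S_lty.
  have S_ge0 : (0 <= S)%E by apply: nneseries_ge0 => n _; rewrite lee_fin.
  have S_fin : S \is a fin_num by rewrite ge0_fin_numE.
  exists (f 0%N + fine S) => N.
  apply: le_trans (le_psum f0 (leqnSn N)) _.
  rewrite big_nat_recl //= lerD2l -lee_fin fineK //.
  have -> : (\sum_(0 <= i < N) f i.+1)%:E = (\sum_(1 <= i < N.+1) (f i)%:E)%E.
    by rewrite -sumEFin big_add1.
  by apply: nneseries_lim_ge => n _ _; rewrite lee_fin.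
apply: le_lt_trans (ltry M); apply: lime_le.
  by apply: is_cvg_nneseries => n _ _; rewrite lee_fin.
apply: nearW => N; rewrite sumEFin lee_fin.
apply: le_trans (fM N); case: N => [|N]; first by rewrite big_geq.
by rewrite (big_cat_nat (leq0n 1) (ltn0Sn N)) /= lerDr big_nat1.
Qed.

Lemma psum_bounded_le {f g} {C : R} {n0} : (forall n, 0 <= f n) ->
  (forall n, 0 <= g n) -> 0 <= C ->
  (forall n, (n0 <= n)%N -> f n <= C * g n) -> psum_bounded g -> psum_bounded f.
Proof.
move=> f0 g0 C0 fg [M gM].
exists (\sum_(0 <= n < n0) f n + C * M) => N.
apply: le_trans (le_psum f0 (leq_maxl N n0)) _.
rewrite (big_cat_nat (leq0n n0) (leq_maxr N n0)) /= lerD2l.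
apply: (@le_trans _ _ (\sum_(n0 <= n < maxn N n0) C * g n)).
  by rewrite !big_nat; apply: ler_sum => n /andP[n0n _]; exact: fg.
rewrite -mulr_sumr ler_wpM2l //; apply: le_trans (gM (maxn N n0)).
rewrite [leRHS](big_cat_nat (leq0n n0) (leq_maxr N n0)) /= lerDr.
by apply: sumr_ge0 => n _.
Qed.

Lemma psum_boundedS f : (forall n, 0 <= f n) ->
  psum_bounded (fun n => f n.+1) <-> psum_bounded f.
Proof.
move=> f0; split=> -[M fM].
  exists (f 0%N + M) => N; apply: le_trans (le_psum f0 (leqnSn N)) _.
  by rewrite big_nat_recl // lerD2l.
exists M => N; apply: le_trans (fM N.+1).
by rewrite [leRHS]big_nat_recl // lerDr.
Qed.

Lemma sumr_divn g (D N : nat) : (0 < D)%N ->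
  \sum_(0 <= n < D * N) g (n %/ D)%N = D%:R * \sum_(0 <= m < N) g m.
Proof.
move=> D0; elim: N => [|N IH]; first by rewrite muln0 !big_geq // mulr0.
rewrite (big_cat_nat (leq0n (D * N)) (leq_mul (leqnn D) (leqnSn N))) /= IH.
rewrite big_nat_recr //= mulrDr; congr (_ + _).
rewrite (eq_big_nat _ _ (F2 := fun=> g N)) ?sumr_const_nat ?mulr_natl.
  by congr (_ *+ _); rewrite mulnS; lia.
move=> i /andP[Ni iN]; congr g; rewrite mulnS in iN.
have -> : i = (N * D + (i - D * N))%N by lia.
by rewrite divnMDl // divn_small ?addn0 //; lia.
Qed.

Lemma psum_bounded_divn {g} {D : nat} : (0 < D)%N -> (forall n, 0 <= g n) ->
  psum_bounded g -> psum_bounded (fun n => g (n %/ D)%N).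
Proof.
move=> D0 g0 [M gM]; exists (D%:R * M) => N.
apply: le_trans (le_psum _ (leq_pmull N D0)) _ => //.
by rewrite sumr_divn // ler_wpM2l.
Qed.

Lemma psum_bounded_chunks {f} {Q : nat -> nat} : (forall n, 0 <= f n) ->
  (forall n, Q n <= Q n.+1)%N -> (forall X, exists N, X <= Q N)%N ->
  psum_bounded (fun n => \sum_(Q n <= m < Q n.+1) f m) <-> psum_bounded f.
Proof.
move=> f0 Q_nondecr Q_unbounded.
have Q0 N : (Q 0%N <= Q N)%N by elim: N => // N /leq_trans; apply.
have chunksE N :
    \sum_(0 <= n < N) \sum_(Q n <= m < Q n.+1) f m = \sum_(Q 0%N <= m < Q N) f m.
  elim: N => [|N IH]; first by rewrite !big_geq.
  by rewrite big_nat_recr //= IH -big_cat_nat.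
split=> -[M fM].
  exists (\sum_(0 <= m < Q 0%N) f m + M) => N; have [N' NN'] := Q_unbounded N.
  apply: le_trans (le_psum f0 NN') _.
  by rewrite (big_cat_nat (leq0n _) (Q0 N')) /= lerD2l -chunksE.
exists M => N; rewrite chunksE; apply: le_trans (fM (Q N)).
by rewrite [leRHS](big_cat_nat (leq0n _) (Q0 N)) /= lerDr; apply: sumr_ge0.
Qed.

Lemma psum_bounded_eventually_lt {f} {eps : R} : (forall n, 0 <= f n) ->
  0 < eps -> psum_bounded f -> exists n1, forall n, (n1 <= n)%N -> f n < eps.
Proof.
move=> f0 eps0 [M fM]; apply: contrapT => /forallNP often_large.
have {}often_large n1 : exists n, (n1 <= n)%N /\ eps <= f n.
  have /existsNP[n /not_implyP[n1n]] := often_large n1.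
  by move/negP; rewrite -leNgt => ?; exists n.
have lin_growth (k : nat) : exists N, k%:R * eps <= \sum_(0 <= n < N) f n.
  elim: k => [|k [N keps]]; first by exists 0%N; rewrite mul0r big_geq.
  have [n [Nn epsn]] := often_large N; exists n.+1.
  rewrite (big_cat_nat (leq0n N) (leqW Nn)) /= big_nat_recr //=.
  rewrite mulrSr mulrDl mul1r lerD //; apply: le_trans epsn _.
  by rewrite lerDr; apply: sumr_ge0 => i _.
have [N kN] := lin_growth (Num.truncn (M / eps)).+1.
have := le_trans kN (fM N); rewrite -ler_pdivlMr // => kM.
by have := lt_le_trans (truncnS_gt (M / eps)) kM; rewrite ltxx.
Qed.

Lemma psum_bounded_div1D {u t} : (forall n, 0 <= u n) -> (forall n, 0 <= t n) ->
  (forall n, u n / (1 + u n) <= t n) -> psum_bounded t -> psum_bounded u.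
Proof.
move=> u0 t0 ut t_bounded.
have half_gt0 : 0 < 2^-1 :> R by rewrite invr_gt0.
have [n1 t_small] := psum_bounded_eventually_lt t0 half_gt0 t_bounded.
apply: (psum_bounded_le u0 t0 (ler0n _ 2) _ t_bounded) => n n1n.
have := t_small n n1n; have := ut n; have := u0 n => un_ge0.
have u1_gt0 : 0 < 1 + u n by lra.
rewrite ler_pdivrMr // => *; nra.
Qed.

End bounded_partial_sums.

(** * Integer parts and doubling sequences *)

Definition floor_mul {R : archiRealFieldType} (c : R) (n : nat) : nat := Num.truncn (c * n%:R).
Definition floor_pow {R : archiRealFieldType} (q : R) (n : nat) : nat := Num.truncn (q ^+ n).

Lemma floor_mul_gt {R : archiRealFieldType} (c : R) n : c * n%:R - 1 < (floor_mul c n)%:R.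
Proof. by have := truncnS_gt (c * n%:R); rewrite -natr1 ltrBlDr. Qed.

Lemma floor_pow_gt {R : archiRealFieldType} (q : R) n : q ^+ n - 1 < (floor_pow q n)%:R.
Proof. by have := truncnS_gt (q ^+ n); rewrite -natr1 ltrBlDr. Qed.

Section floor_mul.
Context {R : archiRealFieldType} {c : R}.
Hypothesis c_gt0 : 0 < c.

Let cn_ge0 n : 0 <= c * n%:R. Proof. by rewrite mulr_ge0 // ltW. Qed.

Lemma floor_mul_le n : (floor_mul c n)%:R <= c * n%:R.
Proof. by rewrite truncn_le cn_ge0. Qed.

Lemma leq_floor_mul i n : (i <= floor_mul c n)%N = (i%:R <= c * n%:R).
Proof. by rewrite truncn_ge_nat. Qed.

Lemma floor_mul_nondecr n m : (n <= m)%N -> (floor_mul c n <= floor_mul c m)%N.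
Proof. by move=> nm; apply: le_truncn; rewrite ler_pM2l // ler_nat. Qed.

End floor_mul.

Section floor_pow.
Context {R : archiRealFieldType} {q : R}.
Hypothesis q_gt1 : 1 < q.

Let qn_ge1 n : 1 <= q ^+ n. Proof. by rewrite exprn_ege1 // ltW. Qed.

Lemma floor_pow_le n : (floor_pow q n)%:R <= q ^+ n.
Proof. by rewrite truncn_le (le_trans ler01). Qed.

Lemma floor_pow_gt0 n : (0 < floor_pow q n)%N.
Proof. by rewrite truncn_gt0. Qed.

Lemma leq_floor_pow m n : (m <= floor_pow q n)%N = (m%:R <= q ^+ n).
Proof. by rewrite truncn_ge_nat // (le_trans ler01). Qed.

Lemma floor_pow_nondecr n m : (n <= m)%N -> (floor_pow q n <= floor_pow q m)%N.
Proof.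
move=> nm; apply: le_truncn; rewrite -(subnKC nm) exprD ler_peMr ?exprn_ege1 ?ltW //.
exact: lt_le_trans ltr01 (qn_ge1 n).
Qed.

Lemma floor_pow_unbounded (X : nat) : exists N, (X <= floor_pow q N)%N.
Proof.
by have [N XqN] := exprn_unbounded q_gt1 X%:R; exists N; rewrite leq_floor_pow XqN.
Qed.

Lemma floor_pow_succ_le_gap n : 2 <= q ^+ n * (q - 1) ->
  (q - 1) * (floor_pow q n.+1)%:R <= 2 * q * (floor_pow q n.+1 - floor_pow q n)%:R.
Proof.
move=> qn_large; have := floor_pow_le n.+1; have := floor_pow_gt q n.+1.
have := floor_pow_le n; have := q_gt1.
rewrite exprS natrB ?floor_pow_nondecr //; set y := q ^+ n in qn_large *.
set A := (floor_pow q n.+1)%:R; set B := (floor_pow q n)%:R => q1 By Ay yA.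
have t1 : 0 <= (q + 1) * (A - (q * y - 1)) by apply: mulr_ge0; lra.
have t2 : 0 <= q * (y * (q - 1) - 2) by apply: mulr_ge0; lra.
have t3 : 0 <= q * (y - B) by apply: mulr_ge0; lra.
lra.
Qed.

Lemma floor_pow_succ2_le_gap n : 2 <= q ^+ n * (q - 1) -> 2 <= q ^+ n ->
  (q - 1) * (floor_pow q n.+2)%:R <= 4 * q ^+ 2 * (floor_pow q n.+1 - floor_pow q n)%:R.
Proof.
move=> qn_large qn_ge2; have := floor_pow_succ_le_gap n qn_large.
have := floor_pow_gt q n.+1; have := floor_pow_le n.+2; have := q_gt1.
have -> : q ^+ n.+2 = q * q * q ^+ n by rewrite !exprS mulrA.
rewrite expr2 exprS natrB ?floor_pow_nondecr //; set y := q ^+ n in qn_large qn_ge2 *.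
set A := (floor_pow q n.+1)%:R; set B := (floor_pow q n)%:R.
set C := (floor_pow q n.+2)%:R => q1 Cy yA gap.
have t1 : 0 <= (q - 1) * (q * q * y - C) by apply: mulr_ge0; lra.
have t2 : 0 <= (q - 1) * y by apply: mulr_ge0; lra.
have t3 : 0 <= (q * (q - 1)) * (2 * A - q * y) by apply: mulr_ge0; [apply: mulr_ge0|]; lra.
have t4 : 0 <= (2 * q) * (2 * q * (A - B) - (q - 1) * A) by apply: mulr_ge0; lra.
lra.
Qed.

End floor_pow.

Section floor_blocks.
Context {R : archiRealFieldType} {c q : R}.
Hypotheses (c_gt0 : 0 < c) (q_gt1 : 1 < q).
Local Notation K := (floor_mul c).
Local Notation Q := (floor_pow q).

Lemma floor_mul_floor_pow_ratio {r n} : 2 * q ^+ 2 <= (2 ^ r)%:R ->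
  2 * (c + 3) <= c * q ^+ n -> (2 <= K (Q n))%N /\ (K (Q n.+2) <= 2 ^ r * K (Q n))%N.
Proof.
move=> r_large qn_large; have := floor_mul_gt c (Q n).
have := floor_mul_le c_gt0 (Q n.+2); have := floor_pow_le q_gt1 n.+2.
have := floor_pow_gt q n; have := q_gt1; have := c_gt0.
have -> : q ^+ n.+2 = q * q * q ^+ n by rewrite !exprS mulrA.
set y := q ^+ n in qn_large *; set Kn := (K (Q n))%:R => c0 q1 Qy yQ KQ2 Kn_gt.
have t0 : 0 <= c * ((Q n)%:R - (y - 1)) by apply: mulr_ge0; lra.
have Kn_gt2 : 2 < Kn by lra.
split; first by rewrite -(ltr_nat R); lra.
rewrite -(ler_nat R) natrM.
have t1 : 0 <= c * (q * q * y - (Q n.+2)%:R) by apply: mulr_ge0; lra.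
have t2 : 0 <= (q * q) * (2 * Kn - c * y) by apply: mulr_ge0; [apply: mulr_ge0|]; lra.
have t3 : 0 <= ((2 ^ r)%:R - 2 * (q * q)) * Kn by apply: mulr_ge0; rewrite -?expr2; lra.
lra.
Qed.

Lemma floor_blocks_regular : exists n0 r, exists2 C : R, 0 <= C & forall n, (n0 <= n)%N ->
  [/\ (2 <= K (Q n))%N, (K (Q n.+2) <= 2 ^ r * K (Q n))%N &
      (Q n.+2)%:R <= C * (Q n.+1 - Q n)%:R].
Proof.
have [r r_large] : exists r, 2 * q ^+ 2 <= (2 ^ r)%:R.
  have [r r_large] := exprn_unbounded (ltr1n R 2) (2 * q ^+ 2).
  by exists r; rewrite natrX; exact: r_large.
have [n0 n0_large] := exprn_unbounded q_gt1 (2 / (q - 1) + 2 * (c + 3) / c + 2).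
have q10 : 0 < q - 1 by rewrite subr_gt0.
exists n0, r, (4 * q ^+ 2 / (q - 1)).
  by rewrite divr_ge0 ?mulr_ge0 ?exprn_ge0 ?ltW // (lt_trans ltr01).
move=> n n0n; have := n0_large n n0n; have := q_gt1; have := c_gt0 => c0 q1 qn_large.
have t1 : 0 <= 2 / (q - 1) by rewrite divr_ge0 ?ltW.
have t2 : 0 <= 2 * (c + 3) / c by rewrite divr_ge0 ?ltW //; lra.
have qn_ge2 : 2 <= q ^+ n by lra.
have gap_large : 2 <= q ^+ n * (q - 1) by rewrite -ler_pdivrMr //; lra.
have c_large : 2 * (c + 3) <= c * q ^+ n by rewrite (mulrC c) -ler_pdivrMr //; lra.
have [K2 KQ] := floor_mul_floor_pow_ratio r_large c_large; split => //.
rewrite mulrAC ler_pdivlMr // mulrC.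
exact: floor_pow_succ2_le_gap.
Qed.

End floor_blocks.

Section doubling.
Context {R : realType} {a : nat -> R}.
Hypothesis a_gt0 : forall n, (0 < n)%N -> 0 < a n.
Hypothesis a_nondecr : forall n, (0 < n)%N -> a n <= a n.+1.

Lemma nondecr_le {n m} : (0 < n)%N -> (n <= m)%N -> a n <= a m.
Proof.
move=> n_gt0; elim: m => [|m IH]; first by rewrite leqn0 => /eqP n0; rewrite n0 in n_gt0.
rewrite leq_eqVlt => /orP[/eqP-> //|nm].
exact: le_trans (IH nm) (a_nondecr _ (leq_trans n_gt0 nm)).
Qed.

Lemma liminf_doubling_ratio : (1 < limn_einf (fun n => (a n.*2 / a n)%:E))%E ->
  exists2 b, 1 < b & exists2 N0, (0 < N0)%N & forall n, (N0 <= n)%N -> b * a n <= a n.*2.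
Proof.
set u := fun n => _ => liminf_gt1.
have [b b_gt1 b_lt] : exists2 b : R, 1 < b & (b%:E < limn_einf u)%E.
  move: liminf_gt1; case: (limn_einf u) => [l| |] //; last by exists 2; rewrite ?ltry ?ltr1n.
  by rewrite lte_fin => l_gt1; exists ((1 + l) / 2); rewrite ?lte_fin; lra.
rewrite limn_einf_lim in b_lt.
have [N _ bN] := lte_lim (@nondecreasing_einfs R u) (@is_cvg_einfs R u) b_lt.
exists b => //; exists N.+1 => // n Nn.
have : (b%:E <= u n)%E.
  by apply: le_trans (bN N (leqnn N)) _; apply: ereal_inf_lbound; exists n => //=; lia.
by rewrite lee_fin ler_pdivlMr // a_gt0 //; lia.
Qed.

Lemma liminf_doubling_dominates {eps} : 0 < eps ->
  (1 < limn_einf (fun n => (a n.*2 / a n)%:E))%E ->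
  exists k, exists2 N0, (0 < N0)%N & forall N, (N0 <= N)%N -> a N <= eps * a (2 ^ k * N).
Proof.
move=> eps_gt0 /liminf_doubling_ratio[b b_gt1 [N0 N0_gt0 ab]].
have [k bk] := exprn_unbounded b_gt1 eps^-1.
exists k, N0 => // N N0N; have aN_gt0 : 0 < a N by apply: a_gt0; lia.
have bpow j : b ^+ j * a N <= a (2 ^ j * N).
  elim: j => [|j IH]; first by rewrite expr0 mul1r mul1n.
  rewrite exprS -mulrA expnS -mulnA mul2n.
  apply: le_trans (ler_wpM2l _ IH) (ab _ _); first exact: ltW (lt_trans ltr01 b_gt1).
  by apply: leq_trans N0N _; rewrite leq_pmull // expn_gt0.
apply: le_trans (_ : eps * (b ^+ k * a N) <= _); last by rewrite ler_pM2l // bpow.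
rewrite mulrA ler_peMl ?(ltW aN_gt0) // -(mulfV (lt0r_neq0 eps_gt0)) ler_pM2l //; exact: bk.
Qed.

End doubling.

(** * Cylinder sigma-algebras *)

(* Events of the array are pulled back along [sample] from [cylinder_space dl], whose
   sigma-algebra is generated by the coordinates in [dl]; there the pi-lambda theorem
   extends the product formula of [iid_array] from cylinders to all measurable sets. *)
Definition config (R : realType) := (nat * nat -> R * R)%type.

Definition cylinder {R : realType} (dl : seq (nat * nat)) : set (set (config R)) :=
  [set C | exists A : nat * nat -> set (R * R),
     (forall t, measurable (A t)) /\ C = [set y | forall t, t \in dl -> A t (y t)]].

Definition cylinder_space (R : realType) (dl : seq (nat * nat)) :=
  g_sigma_algebraType (@cylinder R dl).

Definition pos_index (t : nat * nat) := (0 < t.1)%N && (0 < t.2)%N.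

Section cylinder_space.
Context {R : realType} {dl : seq (nat * nat)}.
Local Notation cspace := (cylinder_space R dl).

Lemma setI_closed_cylinder : setI_closed (@cylinder R dl).
Proof.
move=> _ _ [A [mA ->]] [B [mB ->]].
exists (fun t => A t `&` B t); split; first by move=> t; apply: measurableI.
apply/seteqP; split => y /=; first by move=> [yA yB] t tdl; split; [apply: yA|apply: yB].
by move=> yAB; split => t /yAB[].
Qed.

Lemma cylinderT : @cylinder R dl setT.
Proof. by exists (fun=> setT); split => //; apply/seteqP; split. Qed.

Lemma measurable_coord {t} : t \in dl -> measurable_fun setT (fun y : cspace => y t).
Proof.
move=> tdl _ B mB; rewrite setTI; apply: sub_sigma_algebra.
exists (fun t' => if t' == t then B else setT); split; first by move=> t'; case: ifP.
apply/seteqP; split => y /=; first by move=> yB t' _; case: eqP => [->|].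
by move=> /(_ t tdl); rewrite eqxx.
Qed.

Lemma cylinder_measure_unique (m1 m2 : {measure set cspace -> \bar R}) :
  (m1 setT < +oo)%E -> (forall C, cylinder dl C -> m1 C = m2 C) ->
  forall S : set cspace, measurable S -> m1 S = m2 S.
Proof.
move=> m1_fin m1m2.
apply: (@g_sigma_algebra_measure_unique _ R cspace (cylinder dl) _ (fun=> setT)).
- by move=> C Ccyl; apply: sub_sigma_algebra.
- by move=> _; exact: cylinderT.
- by rewrite bigcup_const //; exists 0%N.
- exact: setI_closed_cylinder.
- exact: m1m2.
- by [].
Qed.

End cylinder_space.

Section probability_preimage.
Context {d : measure_display} {T : measurableType d} {R : realType} (P : probability T R).
Context {dl : seq (nat * nat)} {f : T -> cylinder_space R dl}.
Hypothesis mf : measurable_fun setT f.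

Lemma prob_preimage_unique {g : T -> cylinder_space R dl} :
  measurable_fun setT g ->
  (forall C, cylinder dl C -> P (f @^-1` C) = P (g @^-1` C)) ->
  forall S : set (cylinder_space R dl), measurable S -> P (f @^-1` S) = P (g @^-1` S).
Proof.
move=> mg fg.
(* The measure instance on [pushforward P f] takes the proof [mf], which unification
   cannot find, hence the explicit [refine]. *)
pose Pf : {measure set (cylinder_space R dl) -> \bar R} :=
  ltac:(refine (pushforward P f); exact: mf).
pose Pg : {measure set (cylinder_space R dl) -> \bar R} :=
  ltac:(refine (pushforward P g); exact: mg).
apply: (@cylinder_measure_unique R dl Pf Pg) => //.
by rewrite /Pf /= /pushforward preimage_setT probability_setT ltry.
Qed.

Lemma prob_preimage_indep (B : set T) : measurable B ->
  (forall C, cylinder dl C -> P (f @^-1` C `&` B) = (P (f @^-1` C) * P B)%E) ->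
  forall S : set (cylinder_space R dl), measurable S ->
  P (f @^-1` S `&` B) = (P (f @^-1` S) * P B)%E.
Proof.
move=> mB indepB.
have PB_fin : P B = (fine (P B))%:E by rewrite fineK // fin_num_measure.
pose PBf : {measure set (cylinder_space R dl) -> \bar R} :=
  ltac:(refine (pushforward (mrestr P mB) f); exact: mf).
pose PfPB := mscale (NngNum (fine_ge0 (measure_ge0 P B)))
  (ltac:(refine (pushforward P f); exact: mf) : {measure set _ -> \bar R}).
move=> S mS; rewrite muleC PB_fin.
apply: (@cylinder_measure_unique R dl PBf PfPB) => //.
  by rewrite /PBf /= /pushforward /mrestr preimage_setT setTI
    (le_lt_trans (probability_le1 _ _)) ?ltry.
move=> C Ccyl; rewrite /PBf /PfPB /= /pushforward /mrestr indepB // muleC.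
by congr (_ * _)%E; exact: PB_fin.
Qed.

End probability_preimage.

(** * Row events of the array *)

Section iid_array.
Context {d : measure_display} {T : measurableType d} {R : realType} (P : probability T R)
  (U V : nat -> nat -> T -> R).
Hypothesis iidUV : iid_array P U V.

Let UV_measurable := let: And3 h _ _ := iidUV in h.
Let rvec_indep := let: And3 _ h _ := iidUV in h.
Let rvec_ident := let: And3 _ _ h := iidUV in h.

Definition sample (w : T) : config R := fun t => rvec U V t w.

Lemma measurable_rvec t : measurable_fun setT (rvec U V t).
Proof. by have [mU mV] := UV_measurable t.1 t.2; exact: measurable_fun_pair. Qed.

Lemma measurable_sample_comp dl (phi : nat * nat -> nat * nat) :
  measurable_fun setT ((fun w => sample w \o phi) : T -> cylinder_space R dl).
Proof.
apply: (@measurability _ _ T (cylinder_space R dl) setT _ (cylinder dl)) => // _ [_ [A [mA ->]] <-].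
rewrite setTI; apply: (@fin_bigcap_measurable _ _ _ [set` dl]
  (fun t => rvec U V (phi t) @^-1` A t) (finite_seq dl)) => t _.
by rewrite -[X in measurable X]setTI; apply: measurable_rvec.
Qed.

Lemma measurable_sample dl : measurable_fun setT (sample : T -> cylinder_space R dl).
Proof. exact: measurable_sample_comp id. Qed.

Lemma measurable_sample_preimage dl (S : set (cylinder_space R dl)) :
  measurable S -> measurable (sample @^-1` S).
Proof. by move=> mS; have := measurable_sample dl measurableT S mS; rewrite setTI. Qed.

Lemma prob_sample_cylinder dl (A : nat * nat -> set (R * R)) :
  uniq dl -> {in dl, forall t, pos_index t} -> (forall t, measurable (A t)) ->
  P (sample @^-1` [set y | forall t, t \in dl -> A t (y t)]) =
  \big[*%E/1%E]_(t <- dl) P (rvec U V t @^-1` A t).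
Proof. by move=> dl_uniq dl_pos mA; apply: rvec_indep => // t /dl_pos/andP[]. Qed.

Lemma prob_sample_reindex {dl} {phi : nat * nat -> nat * nat} :
  uniq dl -> injective phi -> {in dl, forall t, pos_index t} ->
  {in dl, forall t, pos_index (phi t)} ->
  forall S : set (cylinder_space R dl), measurable S ->
  P (sample @^-1` S) = P ((fun w => sample w \o phi) @^-1` S).
Proof.
move=> dl_uniq phi_inj dl_pos phi_pos.
apply: prob_preimage_unique; [exact: measurable_sample|exact: measurable_sample_comp|].
move=> _ [A [mA ->]]; rewrite prob_sample_cylinder //.
pose B t := A (nth (0, 0)%N dl (index t (map phi dl))).
have BE t : t \in dl -> B (phi t) = A t by move=> tdl; rewrite /B index_map // nth_index.
have -> : (fun w => sample w \o phi) @^-1` [set y | forall t, t \in dl -> A t (y t)] =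
    sample @^-1` [set y | forall t, t \in map phi dl -> B t (y t)].
  apply/seteqP; split => w /= Aw t; first by move=> /mapP[t0 t0dl ->]; rewrite BE //; exact: Aw.
  by move=> tdl; rewrite -BE //; apply: Aw; exact: map_f.
have map_pos : {in map phi dl, forall t, pos_index t}.
  by move=> _ /mapP[t tdl ->]; exact: phi_pos.
rewrite (prob_sample_cylinder (map phi dl) B _ map_pos (fun t => mA _)) ?map_inj_uniq //.
rewrite big_map; apply: eq_big_seq => t tdl; rewrite BE //.
by have /andP[? ?] := dl_pos t tdl; have /andP[? ?] := phi_pos t tdl; exact: rvec_ident.
Qed.

Lemma prob_sample_cylinder_indep {d1 d2 C1 C2} : uniq (d1 ++ d2) ->
  {in d1 ++ d2, forall t, pos_index t} -> cylinder d1 C1 -> cylinder d2 C2 ->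
  P (sample @^-1` C1 `&` sample @^-1` C2) = (P (sample @^-1` C1) * P (sample @^-1` C2))%E.
Proof.
move=> d_uniq d_pos [A1 [mA1 ->]] [A2 [mA2 ->]].
have := d_uniq; rewrite cat_uniq => /and3P[d1_uniq d12 d2_uniq].
have d1_pos : {in d1, forall t, pos_index t} by move=> t td1; rewrite d_pos // mem_cat td1.
have d2_pos : {in d2, forall t, pos_index t} by move=> t td2; rewrite d_pos // mem_cat td2 orbT.
pose A t := if t \in d1 then A1 t else A2 t.
have A2E t : t \in d2 -> A t = A2 t by move=> td2; rewrite /A ifN //; exact: (hasPn d12).
have -> : sample @^-1` [set y | forall t, t \in d1 -> A1 t (y t)] `&`
    sample @^-1` [set y | forall t, t \in d2 -> A2 t (y t)] =
    sample @^-1` [set y | forall t, t \in d1 ++ d2 -> A t (y t)].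
  apply/seteqP; split => w /=.
    move=> [A1w A2w] t; rewrite mem_cat /A.
    by case: ifP => [td1 _|_ /= td2]; [exact: A1w|exact: A2w].
  move=> Aw; split => t td.
    by have := Aw t; rewrite mem_cat td /A td; apply.
  by rewrite -A2E //; apply: Aw; rewrite mem_cat td orbT.
rewrite !prob_sample_cylinder // => [|t]; last by rewrite /A; case: ifP.
rewrite big_cat /=; congr (_ * _)%E; apply: eq_big_seq => t td; first by rewrite /A td.
by rewrite A2E.
Qed.

Lemma prob_sample_indep {d1 d2} {S1 : set (cylinder_space R d1)}
    {S2 : set (cylinder_space R d2)} :
  uniq (d1 ++ d2) -> {in d1 ++ d2, forall t, pos_index t} ->
  measurable S1 -> measurable S2 ->
  P (sample @^-1` S1 `&` sample @^-1` S2) = (P (sample @^-1` S1) * P (sample @^-1` S2))%E.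
Proof.
move=> d_uniq d_pos mS1 mS2.
have S1_indep C2 : cylinder d2 C2 ->
    P (sample @^-1` S1 `&` sample @^-1` C2) = (P (sample @^-1` S1) * P (sample @^-1` C2))%E.
  move=> C2cyl; apply: (prob_preimage_indep P (measurable_sample d1)) => // [|C1 C1cyl].
    by apply: (measurable_sample_preimage d2); exact: sub_sigma_algebra.
  exact: (prob_sample_cylinder_indep d_uniq d_pos C1cyl C2cyl).
rewrite setIC muleC; apply: (prob_preimage_indep P (measurable_sample d2)) => //.
  exact: measurable_sample_preimage.
by move=> C2 C2cyl; rewrite setIC muleC; exact: S1_indep.
Qed.

Definition exceed_cfg (m : nat) (s : seq nat) (x : R) : set (config R) :=
  [set y | exists i j, [/\ i \in s, j \in s, i != j & x <= `|(y (m, i)).1 * (y (m, j)).2|]].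

Definition exceed (m : nat) (s : seq nat) (x : R) : set T :=
  [set w | exists i j, [/\ i \in s, j \in s, i != j & x <= `|U m i w * V m j w|]].

Lemma exceedE m s x : exceed m s x = sample @^-1` exceed_cfg m s x.
Proof. by []. Qed.

Lemma subset_exceed m s s' x x' : {subset s <= s'} -> x' <= x ->
  exceed m s x `<=` exceed m s' x'.
Proof.
move=> ss' x'x w [i [j [si sj ij xw]]]; exists i, j.
by split; [exact: ss'|exact: ss'|by []|exact: le_trans xw].
Qed.

Lemma measurable_exceed_cfg dl m s x : {in s, forall i, (m, i) \in dl} ->
  measurable (exceed_cfg m s x : set (cylinder_space R dl)).
Proof.
move=> s_dl.
have -> : exceed_cfg m s x = \bigcup_(i in [set` s]) \bigcup_(j in [set j | j \in s /\ i != j])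
    [set y : config R | x <= `|(y (m, i)).1 * (y (m, j)).2|].
  apply/seteqP; split => y /=; first by move=> [i [j [si sj ij xy]]]; exists i => //; exists j.
  by move=> [i si [j [sj ij] xy]]; exists i, j.
apply: bigcup_measurable => i si; apply: bigcup_measurable => j [sj _].
have mfst := measurableT_comp measurable_fst (@measurable_coord R _ _ (s_dl i si)).
have msnd := measurableT_comp measurable_snd (@measurable_coord R _ _ (s_dl j sj)).
have := measurableT_comp (@measurable_realfun.normr_measurable R setT)
  (measurable_realfun.measurable_funM mfst msnd).
move=> /(_ measurableT _ (measurable_itv `[x, +oo[)); rewrite setTI.
by congr measurable; apply/seteqP; split => y /=; rewrite in_itv /= andbT.
Qed.

Lemma measurable_exceed m s x : measurable (exceed m s x).
Proof.
rewrite exceedE; apply: (measurable_sample_preimage [seq (m, i) | i <- s]).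
by apply: measurable_exceed_cfg => i si; exact: map_f.
Qed.

Lemma prob_exceed_reindex m m' s (psi : nat -> nat) x :
  uniq s -> injective psi -> (0 < m)%N -> (0 < m')%N ->
  {in s, forall i, 0 < i}%N -> {in s, forall i, 0 < psi i}%N ->
  P (exceed m' (map psi s) x) = P (exceed m s x).
Proof.
move=> s_uniq psi_inj m_gt0 m'_gt0 s_pos psi_pos.
pose swap k := if k == m then m' else if k == m' then m else k.
have swapK : involutive swap by move=> k; rewrite /swap; do ![case: eqP => /=]; congruence.
pose phi (t : nat * nat) := (swap t.1, psi t.2).
have phi_inj : injective phi.
  by move=> [k i] [k' i'] [/(inv_inj swapK) -> /psi_inj ->].
pose dl := [seq (m, i) | i <- s].
have mF : measurable (exceed_cfg m s x : set (cylinder_space R dl)).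
  by apply: measurable_exceed_cfg => i si; exact: map_f.
rewrite exceedE (prob_sample_reindex _ phi_inj _ _ _ mF).
- congr (P _); apply/seteqP; split => w /=.
    move=> [_ [_ [/mapP[i si ->] /mapP[j sj ->] ij xw]]]; exists i, j.
    by rewrite /phi /swap /= eqxx; split => //; apply: contraNneq ij => ->.
  move=> [i [j [si sj ij]]]; rewrite /phi /swap /= eqxx => xw.
  by exists (psi i), (psi j); split; rewrite ?map_f ?inj_eq.
- by rewrite map_inj_uniq // => i j [].
- by move=> _ /mapP[i si ->]; rewrite /pos_index /= m_gt0 s_pos.
- by move=> _ /mapP[i si ->]; rewrite /pos_index /phi /swap /= eqxx m'_gt0 psi_pos.
Qed.

Lemma prob_bigcap_not_exceed ms s x : uniq ms -> uniq s ->
  {in ms, forall m, 0 < m}%N -> {in s, forall i, 0 < i}%N ->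
  P (\bigcap_(m in [set` ms]) ~` exceed m s x) =
  \big[*%E/1%E]_(m <- ms) (1 - P (exceed m s x))%E.
Proof.
elim: ms => [|m ms IH] ms_uniq s_uniq ms_pos s_pos.
  by rewrite set_nil bigcap_set0 probability_setT big_nil.
move: ms_uniq; rewrite cons_uniq => /andP[m_ms ms_uniq].
pose d1 := [seq (m, i) | i <- s].
pose d2 := [seq (k, i) | k <- ms, i <- s].
have d_uniq : uniq (d1 ++ d2).
  rewrite cat_uniq; apply/and3P; split.
  - by rewrite map_inj_uniq // => i j [].
  - apply/hasPn => _ /allpairsP[[k i] [/= k_ms _ ->]].
    by apply/negP => /mapP[j _ [km _]]; move: m_ms; rewrite -km k_ms.
  - by rewrite allpairs_uniq // => [[k i] [k' i']] _ _ /=.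
have d_pos : {in d1 ++ d2, forall t, pos_index t}.
  move=> t; rewrite mem_cat => /orP[/mapP[i si ->]|/allpairsP[[k i] [/= k_ms si ->]]].
    by rewrite /pos_index /= (s_pos i si) ms_pos ?mem_head.
  by rewrite /pos_index /= (s_pos i si) ms_pos // in_cons k_ms orbT.
have m1 : measurable (~` exceed_cfg m s x : set (cylinder_space R d1)).
  by apply: measurableC; apply: measurable_exceed_cfg => i si; exact: map_f.
have m2 : measurable (\bigcap_(k in [set` ms]) ~` exceed_cfg k s x : set (cylinder_space R d2)).
  apply: (fin_bigcap_measurable (finite_seq ms)) => k k_ms.
  apply: measurableC; apply: measurable_exceed_cfg => i si.
  by apply/allpairsP; exists (k, i).
rewrite !bigcap_seq big_cons -bigcap_seq big_cons.
rewrite (prob_sample_indep d_uniq d_pos m1 m2) IH //; last first.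
  by move=> k k_ms; apply: ms_pos; rewrite inE k_ms orbT.
by rewrite -probability_setC //; exact: measurable_exceed.
Qed.

Definition prob (A : set T) : R := fine (P A).

Lemma probE A : measurable A -> P A = (prob A)%:E.
Proof. by move=> mA; rewrite fineK // fin_num_measure. Qed.

Lemma prob_ge0 A : 0 <= prob A.
Proof. exact: fine_ge0. Qed.

Lemma prob_le1 A : measurable A -> prob A <= 1.
Proof. by move=> mA; rewrite -lee_fin -probE //; exact: probability_le1. Qed.

Lemma le_prob A B : measurable A -> measurable B -> A `<=` B -> prob A <= prob B.
Proof. by move=> mA mB AB; rewrite -lee_fin -!probE //; apply: le_measure; rewrite ?inE. Qed.

Lemma probC A : measurable A -> prob (~` A) = 1 - prob A.
Proof.
move=> mA; have := probability_setC P mA.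
by rewrite !probE //; [case|exact: measurableC].
Qed.

Lemma prob_bigcup_le {I : choiceType} (l : seq I) (F : I -> set T) :
  (forall i, measurable (F i)) ->
  prob (\bigcup_(i in [set` l]) F i) <= \sum_(i <- l) prob (F i).
Proof.
move=> mF; rewrite bigcup_seq; elim: l => [|i l IH]; first by rewrite !big_nil /prob measure0.
have mFl : measurable (\big[setU/set0]_(j <- l) F j) by apply: bigsetU_measurable.
rewrite !big_cons; apply: le_trans (_ : _ <= prob (F i) + prob (\big[setU/set0]_(j <- l) F j)) _.
  by rewrite -lee_fin EFinD -!probE //; [exact: measureU2|exact: measurableU].
by rewrite lerD2l.
Qed.

Definition tail_prob (K : nat) (x : R) := prob (exceed 1 (iota 1 K) x).

Lemma tail_prob_ge0 K x : 0 <= tail_prob K x.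
Proof. exact: prob_ge0. Qed.

Lemma tail_prob_le1 K x : tail_prob K x <= 1.
Proof. exact/prob_le1/measurable_exceed. Qed.

Lemma le_tail_prob {K K' x x'} : (K <= K')%N -> x' <= x -> tail_prob K x <= tail_prob K' x'.
Proof.
move=> KK' x'x; apply: le_prob; try exact: measurable_exceed.
apply: subset_exceed => // i; rewrite !mem_iota => /andP[-> iK] /=.
by apply: leq_trans iK _; rewrite leq_add2l.
Qed.

Lemma prob_exceed_row m K x : (0 < m)%N -> prob (exceed m (iota 1 K) x) = tail_prob K x.
Proof.
move=> m_gt0; rewrite /tail_prob /prob -[in LHS](map_id (iota 1 K)).
by rewrite (prob_exceed_reindex 1) ?iota_uniq // => i; rewrite mem_iota => /andP[].
Qed.

Definition two_blocks (a b L i : nat) : nat :=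
  (if i <= L then a * L + i else b * L + i - L)%N.

Lemma two_blocks_inj a b L : (a < b)%N -> injective (two_blocks a b L).
Proof.
move=> ab; have : (a * L + L <= b * L)%N by rewrite -ssrnat.mulSnr leq_mul2r ab orbT.
by move=> aLbL i j; rewrite /two_blocks; case: ifP; case: ifP; lia.
Qed.

Lemma mem_two_blocks a b L i : (a < b)%N ->
  ((a * L < i <= a * L + L) || (b * L < i <= b * L + L))%N ->
  i \in map (two_blocks a b L) (iota 1 (2 * L)).
Proof.
move=> ab /orP[|] /andP[Li iL]; apply/mapP.
  by exists (i - a * L)%N; [rewrite mem_iota|rewrite /two_blocks; case: ifP]; lia.
by exists (i - b * L + L)%N; [rewrite mem_iota|rewrite /two_blocks; case: ifP]; lia.
Qed.

Lemma exists_block {L i} : (0 < L)%N -> (1 <= i <= 4 * L)%N ->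
  exists2 k, (k < 4)%N & (k * L < i <= k * L + L)%N.
Proof.
move=> L_gt0 /andP[i_gt0 i4L]; exists ((i - 1) %/ L)%N; first by rewrite ltn_divLR //; lia.
by have := divn_eq (i - 1) L; have := ltn_mod (i - 1) L; rewrite L_gt0; lia.
Qed.

Definition block_pairs : seq (nat * nat) :=
  [:: (0, 1); (0, 2); (0, 3); (1, 2); (1, 3); (2, 3)]%N.

Lemma mem_block_pairs a b : (a < b)%N -> (b < 4)%N -> (a, b) \in block_pairs.
Proof. by case: a => [|[|[|[|a]]]]; case: b => [|[|[|[|b]]]]. Qed.

Lemma block_pair_cover {L i j} : (0 < L)%N -> (1 <= i <= 4 * L)%N -> (1 <= j <= 4 * L)%N ->
  exists2 ab, ab \in block_pairs &
    {subset [:: i; j] <= map (two_blocks ab.1 ab.2 L) (iota 1 (2 * L))}.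
Proof.
move=> L_gt0 i4L j4L.
have [ki ki4 i_ki] := exists_block L_gt0 i4L; have [kj kj4 j_kj] := exists_block L_gt0 j4L.
have [a [b [ab b4 i_ab j_ab]]] : exists a b, [/\ (a < b)%N, (b < 4)%N,
    ((a * L < i <= a * L + L) || (b * L < i <= b * L + L))%N &
    ((a * L < j <= a * L + L) || (b * L < j <= b * L + L))%N].
  case: (ltngtP ki kj) => [kij|kji|kij]; first by exists ki, kj; split; lia.
    by exists kj, ki; split; lia.
  subst kj; have [ki3|ki3] := ltnP ki 3; first by exists ki, ki.+1; split; lia.
  have ki_3 : ki = 3%N by lia.
  by subst ki; exists 2%N, 3%N; split; lia.
exists (a, b); first exact: mem_block_pairs.
by move=> k; rewrite !inE => /orP[]/eqP->; exact: mem_two_blocks.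
Qed.

(* The event on [1, 4L] is covered by the six events on pairs of blocks of length L, each
   of which has the law of the event on [1, 2L]. *)
Lemma tail_prob_double {L} x : (0 < L)%N -> tail_prob (4 * L) x <= 6 * tail_prob (2 * L) x.
Proof.
move=> L_gt0.
pose F (ab : nat * nat) := exceed 1 (map (two_blocks ab.1 ab.2 L) (iota 1 (2 * L))) x.
have probF ab : ab \in block_pairs -> prob (F ab) = tail_prob (2 * L) x.
  move=> ab_pairs; have ab_lt : (ab.1 < ab.2)%N by move: ab ab_pairs; apply/allP.
  rewrite /prob /F (prob_exceed_reindex 1) ?iota_uniq //; first exact: two_blocks_inj.
    by move=> i; rewrite mem_iota; lia.
  by move=> i; rewrite mem_iota /two_blocks; case: ifP; lia.
have : tail_prob (4 * L) x <= \sum_(ab <- block_pairs) prob (F ab).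
  apply: le_trans _ (prob_bigcup_le block_pairs F (fun ab => measurable_exceed _ _ _)).
  apply: le_prob; first exact: measurable_exceed.
    by apply: (fin_bigcup_measurable (finite_seq _)) => ab _; exact: measurable_exceed.
  move=> w [i [j [+ + ij xw]]]; rewrite !mem_iota => i4L j4L.
  have [ab ab_pairs ij_ab] := @block_pair_cover L i j L_gt0 ltac:(lia) ltac:(lia).
  by exists ab => //; exists i, j; split; rewrite ?ij_ab ?inE ?eqxx ?orbT.
rewrite (eq_big_seq (fun=> tail_prob (2 * L) x)) => [|ab /probF //].
by rewrite /block_pairs !big_cons big_nil; lra.
Qed.

Lemma tail_prob_scale {K K' x j} : (2 <= K)%N -> (K' <= 2 ^ j * K)%N ->
  tail_prob K' x <= 6 ^+ j.+1 * tail_prob K x.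
Proof.
move=> K_ge2 K'K; pose L := (K %/ 2)%N.
have := divn_eq K 2; have := ltn_mod K 2 => K_mod K_div.
have L_gt0 : (0 < L)%N by rewrite /L; lia.
have pow2 i : tail_prob (2 ^ i.+1 * L) x <= 6 ^+ i * tail_prob (2 * L) x.
  elim: i => [|i IH]; first by rewrite expn1 expr0 mul1r.
  have -> : (2 ^ i.+2 * L = 4 * (2 ^ i * L))%N by rewrite !expnS; ring.
  have L_pos : (0 < 2 ^ i * L)%N by rewrite muln_gt0 expn_gt0.
  apply: le_trans (tail_prob_double x L_pos) _.
  by rewrite exprS -mulrA ler_wpM2l // mulnA -expnS.
have K'L : (K' <= 2 ^ j.+2 * L)%N.
  have K4L : (K <= 4 * L)%N by rewrite /L; lia.
  apply: leq_trans K'K _; rewrite (_ : 2 ^ j.+2 * L = 2 ^ j * (4 * L))%N.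
    by rewrite leq_mul2l K4L orbT.
  by rewrite !expnS; ring.
apply: le_trans (le_tail_prob K'L (lexx x)) _.
apply: le_trans (pow2 j.+1) _; rewrite ler_wpM2l ?exprn_ge0 //.
by apply: le_tail_prob => //; rewrite /L; lia.
Qed.

Lemma prob_bigcup_exceed_ge ms K x : uniq ms -> {in ms, forall m, 0 < m}%N ->
  1 - (1 - tail_prob K x) ^+ size ms <=
  prob (\bigcup_(m in [set` ms]) exceed m (iota 1 K) x).
Proof.
move=> ms_uniq ms_pos; rewrite -[X in prob X]setCK setC_bigcup probC; last first.
  by apply: (fin_bigcap_measurable (finite_seq ms)) => m _; exact/measurableC/measurable_exceed.
rewrite /prob prob_bigcap_not_exceed ?iota_uniq // => [|i]; last by rewrite mem_iota => /andP[].
rewrite (eq_big_seq (fun=> (1 - tail_prob K x)%:E)) => [|m m_ms].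
  by rewrite prodEFin big_const_seq count_predT iter_mulr_1.
by rewrite probE ?prob_exceed_row ?ms_pos //; exact: measurable_exceed.
Qed.

(** * The three series *)

Section scaled_sums.
Variables (a : nat -> R) (c : R).
Hypothesis a_gt0 : forall n, (0 < n)%N -> 0 < a n.
Hypothesis a_nondecr : forall n, (0 < n)%N -> a n <= a n.+1.
Hypothesis c_gt0 : 0 < c.
Local Notation K := (floor_mul c).

Lemma diag_series_lty :
  (\sum_(1 <= n <oo)
      P [set w | exists i j : nat, ((1 <= i <= n)%N /\ (1 <= j <= n)%N /\ i != j /\
                   a n <= `|U 1%N i w * V 1%N j w|)%R ] < +oo)%E <->
  psum_bounded (fun n => tail_prob n (a n)).
Proof.
rewrite -nneseries_lty_psum_bounded => [|n]; last exact: tail_prob_ge0.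
rewrite (eq_eseriesr (g := fun n => (tail_prob n (a n))%:E)) // => n _.
rewrite -probE; last exact: measurable_exceed.
congr (P _); apply/seteqP; split => w /=.
  by move=> [i [j [i_n [j_n [ij aw]]]]]; exists i, j; rewrite !mem_iota; split => //; lia.
by move=> [i [j]]; rewrite !mem_iota => -[i_n j_n ij aw]; exists i, j; do !split => //; lia.
Qed.

Lemma scaled_series_lty eps :
  (\sum_(1 <= n <oo)
      P [set w | exists i j : nat, ((1 <= i)%N /\ i%:R <= c * n%:R /\
                   (1 <= j)%N /\ j%:R <= c * n%:R /\ i != j /\
                   eps * a n <= `|U 1%N i w * V 1%N j w|)%R ] < +oo)%E <->
  psum_bounded (fun n => tail_prob (K n) (eps * a n)).
Proof.
rewrite -nneseries_lty_psum_bounded => [|n]; last exact: tail_prob_ge0.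
rewrite (eq_eseriesr (g := fun n => (tail_prob (K n) (eps * a n))%:E)) // => n _.
rewrite -probE; last exact: measurable_exceed.
congr (P _); apply/seteqP; split => w /=.
  move=> [i [j [i_gt0 [i_cn [j_gt0 [j_cn [ij aw]]]]]]]; exists i, j.
  by rewrite !mem_iota !add1n !ltnS !leq_floor_mul // i_cn j_cn i_gt0 j_gt0.
move=> [i [j]]; rewrite !mem_iota !add1n !ltnS !leq_floor_mul // => -[/andP[? ?] /andP[? ?] ij aw].
by exists i, j.
Qed.

Lemma scaled_sums_of_diag_sums : (1 < limn_einf (fun n => (a n.*2 / a n)%:E))%E ->
  psum_bounded (fun n => tail_prob n (a n)) ->
  forall eps, 0 < eps -> psum_bounded (fun n => tail_prob (K n) (eps * a n)).
Proof.
move=> liminf_gt1 diag eps eps_gt0.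
have [k [N0 N0_gt0 dominated]] := liminf_doubling_dominates a_gt0 eps_gt0 liminf_gt1.
have [r r_large] := exprn_unbounded (ltr1n R 2) (c * 2 ^+ k.+1).
have D_gt0 : (0 < 2 ^ k)%N by rewrite expn_gt0.
apply: (psum_bounded_le (C := 6 ^+ r.+1) (n0 := 2 ^ k.+1 * N0) (fun n => tail_prob_ge0 _ _)
  (fun n => tail_prob_ge0 _ _) (exprn_ge0 _ _) _
  (psum_bounded_divn D_gt0 (fun n => tail_prob_ge0 _ _) diag)) => // n n_large /=.
set N := (n %/ 2 ^ k)%N.
have N_large : (2 * N0 <= N)%N by rewrite leq_divRL // -mulnAC -expnS.
have N_gt1 : (1 < N)%N by lia.
have aN_le : a N <= eps * a n.
  have DN_gt0 : (0 < 2 ^ k * N)%N by rewrite muln_gt0 D_gt0; lia.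
  have DN_le : (2 ^ k * N <= n)%N by rewrite mulnC leq_divM.
  apply: le_trans (dominated N ltac:(lia)) _.
  by rewrite ler_wpM2l ?(ltW eps_gt0) ?(nondecr_le a_nondecr DN_gt0 DN_le).
have Kn_le : (K n <= 2 ^ r * N)%N.
  have n_le : (n <= 2 ^ k.+1 * N)%N.
    by apply: ltnW (leq_trans (ltn_ceil n D_gt0) _); rewrite expnS; nia.
  rewrite -(ler_nat R) natrM natrX; apply: le_trans (floor_mul_le c_gt0 n) _.
  apply: le_trans (ler_wpM2l (ltW c_gt0) (_ : n%:R <= 2 ^+ k.+1 * N%:R)) _.
    by rewrite -natrX -natrM ler_nat.
  by rewrite mulrA ler_wpM2r // r_large.
exact: le_trans (le_tail_prob (leqnn _) aN_le) (tail_prob_scale N_gt1 Kn_le).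
Qed.

Lemma diag_sums_of_scaled_sums :
  (forall eps, 0 < eps -> psum_bounded (fun n => tail_prob (K n) (eps * a n))) ->
  psum_bounded (fun n => tail_prob n (a n)).
Proof.
move=> scaled; have [r r_large] := exprn_unbounded (ltr1n R 2) (2 / c).
have c2r : 2 <= c * 2 ^+ r by have := r_large r (leqnn r); rewrite ler_pdivrMr // mulrC.
apply: (psum_bounded_le (C := 6 ^+ r.+1) (n0 := (Num.truncn (4 / c)).+1)
  (fun n => tail_prob_ge0 _ _) (fun n => tail_prob_ge0 _ _) (exprn_ge0 _ _) _
  (scaled 1 ltr01)) => // n n_large; rewrite mul1r.
have cn_gt4 : 4 < c * n%:R.
  rewrite mulrC -ltr_pdivrMr //; apply: lt_le_trans (truncnS_gt _) _.
  by rewrite ler_nat.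
have := floor_mul_gt c n; have := c_gt0 => c0 Kn_gt.
have K_gt1 : (1 < K n)%N by rewrite -(ltr_nat R); lra.
have n_le : (n <= 2 ^ r * K n)%N.
  rewrite -(ler_nat R) natrM natrX.
  have r_ge0 : 0 <= 2 ^+ r :> R by rewrite exprn_ge0.
  have t1 : 0 <= 2 ^+ r * ((K n)%:R - (c * n%:R - 1)) by apply: mulr_ge0; lra.
  have t2 : 0 <= 2 ^+ r * (c * n%:R - 2) by apply: mulr_ge0; lra.
  have t3 : 0 <= (c * 2 ^+ r - 2) * n%:R by apply: mulr_ge0; [lra|exact: ler0n].
  lra.
exact: tail_prob_scale K_gt1 n_le.
Qed.

Lemma diag_sums_iff_scaled_sums : (1 < limn_einf (fun n => (a n.*2 / a n)%:E))%E ->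
  psum_bounded (fun n => tail_prob n (a n)) <->
  forall eps, 0 < eps -> psum_bounded (fun n => tail_prob (K n) (eps * a n)).
Proof.
by move=> liminf_gt1; split; [exact: scaled_sums_of_diag_sums|exact: diag_sums_of_scaled_sums].
Qed.

Section rows.
Variable q : R.
Hypothesis q_gt1 : 1 < q.
Local Notation Q := (floor_pow q).

Definition exceed_rows (eps : R) (n : nat) : set T :=
  \bigcup_(m in [set` iota 1 (Q n)]) exceed m (iota 1 (K m)) (eps * a (Q n)).

Lemma measurable_exceed_rows eps n : measurable (exceed_rows eps n).
Proof. by apply: (fin_bigcup_measurable (finite_seq _)) => m _; exact: measurable_exceed. Qed.

Lemma prob_exceed_rows_le eps n :
  prob (exceed_rows eps n) <= (Q n)%:R * tail_prob (K (Q n)) (eps * a (Q n)).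
Proof.
apply: le_trans (prob_bigcup_le _ (fun m => exceed m (iota 1 (K m)) (eps * a (Q n)))
  (fun m => measurable_exceed _ _ _)) _.
have -> : (Q n)%:R * tail_prob (K (Q n)) (eps * a (Q n)) =
    \sum_(m <- iota 1 (Q n)) tail_prob (K (Q n)) (eps * a (Q n)).
  by rewrite big_const_seq count_predT size_iota iter_addr_0 mulr_natl.
rewrite big_seq [leRHS]big_seq; apply: ler_sum => m; rewrite mem_iota => /andP[m_gt0 mQ].
rewrite prob_exceed_row //; apply: le_tail_prob => //; apply: floor_mul_nondecr => //; lia.
Qed.

Lemma tail_prob_block_ge eps n : 0 <= eps ->
  (Q n.+1 - Q n)%:R * tail_prob (K (Q n)) (eps * a (Q n.+1)) <=
  \sum_(Q n <= m < Q n.+1) tail_prob (K m) (eps * a m).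
Proof.
move=> eps_ge0; rewrite mulr_natl -sumr_const_nat.
apply: ler_sum_nat => m /andP[Qn_m m_Qn1].
apply: le_tail_prob; first exact: floor_mul_nondecr.
have m_gt0 : (0 < m)%N := leq_trans (floor_pow_gt0 q_gt1 n) Qn_m.
exact: (ler_wpM2l eps_ge0 (nondecr_le a_nondecr m_gt0 (ltnW m_Qn1))).
Qed.

Lemma block_sum_le_tail_prob eps n r : 0 <= eps ->
  (2 <= K (Q n))%N -> (K (Q n.+2) <= 2 ^ r * K (Q n))%N ->
  \sum_(Q n.+1 <= m < Q n.+2) tail_prob (K m) (eps * a m) <=
  (Q n.+2)%:R * (6 ^+ r.+1 * tail_prob (K (Q n)) (eps * a (Q n.+1))).
Proof.
move=> eps_ge0 KQ_ge2 KQ_ratio.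
apply: le_trans (_ : \sum_(Q n.+1 <= m < Q n.+2)
    6 ^+ r.+1 * tail_prob (K (Q n)) (eps * a (Q n.+1)) <= _).
  apply: ler_sum_nat => m /andP[Qn1_m m_Qn2].
  apply: le_trans _ (tail_prob_scale KQ_ge2 KQ_ratio).
  apply: le_tail_prob; first exact/floor_mul_nondecr/ltnW.
  exact: (ler_wpM2l eps_ge0 (nondecr_le a_nondecr (floor_pow_gt0 q_gt1 n.+1) Qn1_m)).
rewrite sumr_const_nat -[_ *+ (_ - _)]mulr_natl; apply: ler_wpM2r; last by rewrite ler_nat leq_subr.
by rewrite mulr_ge0 ?exprn_ge0 ?tail_prob_ge0.
Qed.

Lemma prob_rows_le_block_sum eps n r (C : R) : 0 <= eps -> 0 <= C ->
  (2 <= K (Q n))%N -> (K (Q n.+2) <= 2 ^ r * K (Q n))%N ->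
  (Q n.+2)%:R <= C * (Q n.+1 - Q n)%:R ->
  prob (exceed_rows eps n.+1) <=
  C * 6 ^+ r.+1 * \sum_(Q n <= m < Q n.+1) tail_prob (K m) (eps * a m).
Proof.
move=> eps_ge0 C_ge0 KQ_ge2 KQ_ratio Q_gap.
set p := tail_prob (K (Q n)) (eps * a (Q n.+1)).
have scale : tail_prob (K (Q n.+1)) (eps * a (Q n.+1)) <= 6 ^+ r.+1 * p.
  apply: tail_prob_scale KQ_ge2 (leq_trans _ KQ_ratio).
  exact/floor_mul_nondecr/floor_pow_nondecr.
have Q1_gap : (Q n.+1)%:R <= C * (Q n.+1 - Q n)%:R.
  by apply: le_trans Q_gap; rewrite ler_nat floor_pow_nondecr.
apply: le_trans (prob_exceed_rows_le eps n.+1) _.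
apply: le_trans (ler_wpM2l (ler0n _ _) scale) _.
apply: le_trans (ler_wpM2r _ Q1_gap) _; first by rewrite mulr_ge0 ?exprn_ge0 ?tail_prob_ge0.
rewrite -/p (_ : C * _ * (_ * p) = C * 6 ^+ r.+1 * ((Q n.+1 - Q n)%:R * p)); last by ring.
by apply: ler_wpM2l (tail_prob_block_ge eps n eps_ge0); rewrite mulr_ge0 ?exprn_ge0.
Qed.

Lemma gap_ratio_le_prob_rows eps n : 0 <= eps ->
  (Q n.+1 - Q n)%:R * tail_prob (K (Q n)) (eps * a (Q n.+1)) /
    (1 + (Q n.+1 - Q n)%:R * tail_prob (K (Q n)) (eps * a (Q n.+1))) <=
  prob (exceed_rows eps n.+1).
Proof.
move=> eps_ge0; pose ms := iota (Q n).+1 (Q n.+1 - Q n).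
have ms_pos : {in ms, forall m, 0 < m}%N.
  by move=> m; rewrite mem_iota => /andP[/(leq_trans (ltn0Sn _))].
apply: le_trans (one_sub_expr_ge _) _; first by rewrite tail_prob_ge0 tail_prob_le1.
have := prob_bigcup_exceed_ge ms (K (Q n)) (eps * a (Q n.+1)) (iota_uniq _ _) ms_pos.
rewrite size_iota => /le_trans; apply; apply: le_prob; last first.
- move=> w [m]; rewrite /= mem_iota => /andP[Qn_m mQ] mw.
  have Qn1_m : (m <= Q n.+1)%N by move: mQ; rewrite addSn subnKC ?floor_pow_nondecr.
  exists m; first by rewrite /= mem_iota; lia.
  apply: subset_exceed mw => // i; rewrite !mem_iota => /andP[-> iK] /=.
  by apply: leq_trans iK _; rewrite leq_add2l floor_mul_nondecr // ltnW.
- exact: measurable_exceed_rows.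
- by apply: (fin_bigcup_measurable (finite_seq _)) => m _; exact: measurable_exceed.
Qed.

Let floor_pow_succ n : (Q n <= Q n.+1)%N.
Proof. exact: floor_pow_nondecr. Qed.

Let block_sum_ge0 eps n : 0 <= \sum_(Q n <= m < Q n.+1) tail_prob (K m) (eps * a m).
Proof. by apply: sumr_ge0 => m _; exact: tail_prob_ge0. Qed.

Lemma prob_rows_sums_of_scaled_sums eps : 0 < eps ->
  psum_bounded (fun n => tail_prob (K n) (eps * a n)) ->
  psum_bounded (fun n => prob (exceed_rows eps n)).
Proof.
move=> eps_gt0 scaled; have [n0 [r [C C_ge0 regular]]] := floor_blocks_regular c_gt0 q_gt1.
have chunks := (psum_bounded_chunks (fun m => tail_prob_ge0 _ _) floor_pow_succ
  (floor_pow_unbounded q_gt1)).2 scaled.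
apply/(psum_boundedS _ (fun n => prob_ge0 _)).
apply: (psum_bounded_le (C := C * 6 ^+ r.+1) (n0 := n0) (fun n => prob_ge0 _)
  (block_sum_ge0 eps) _ _ chunks); first by rewrite mulr_ge0 ?exprn_ge0.
move=> n /regular[KQ_ge2 KQ_ratio Q_gap].
exact: prob_rows_le_block_sum (ltW eps_gt0) C_ge0 KQ_ge2 KQ_ratio Q_gap.
Qed.

Lemma scaled_sums_of_prob_rows_sums eps : 0 < eps ->
  psum_bounded (fun n => prob (exceed_rows eps n)) ->
  psum_bounded (fun n => tail_prob (K n) (eps * a n)).
Proof.
move=> eps_gt0 rows; have [n0 [r [C C_ge0 regular]]] := floor_blocks_regular c_gt0 q_gt1.
pose u n := (Q n.+1 - Q n)%:R * tail_prob (K (Q n)) (eps * a (Q n.+1)).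
have u_ge0 n : 0 <= u n by rewrite mulr_ge0 ?tail_prob_ge0.
have u_bounded : psum_bounded u.
  apply: (psum_bounded_div1D u_ge0 (fun n => prob_ge0 (exceed_rows eps n.+1))).
    by move=> n; exact: gap_ratio_le_prob_rows (ltW eps_gt0).
  exact/(psum_boundedS _ (fun n => prob_ge0 _)).
apply/(psum_bounded_chunks (fun m => tail_prob_ge0 _ _) floor_pow_succ
  (floor_pow_unbounded q_gt1)).
apply/(psum_boundedS _ (block_sum_ge0 eps)).
apply: (psum_bounded_le (C := C * 6 ^+ r.+1) (n0 := n0) (fun n => block_sum_ge0 _ _)
  u_ge0 _ _ u_bounded); first by rewrite mulr_ge0 ?exprn_ge0.
move=> n /regular[KQ_ge2 KQ_ratio Q_gap].
apply: le_trans (block_sum_le_tail_prob eps n r (ltW eps_gt0) KQ_ge2 KQ_ratio) _.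
apply: le_trans (ler_wpM2r _ Q_gap) _; first by rewrite mulr_ge0 ?exprn_ge0 ?tail_prob_ge0.
by rewrite /u -!mulrA (mulrCA (Q n.+1 - Q n)%:R).
Qed.

Lemma scaled_sums_iff_rows_sums eps : 0 < eps ->
  psum_bounded (fun n => tail_prob (K n) (eps * a n)) <->
  psum_bounded (fun n => prob (exceed_rows eps n)).
Proof.
move=> eps_gt0.
by split; [exact: prob_rows_sums_of_scaled_sums|exact: scaled_sums_of_prob_rows_sums].
Qed.

Lemma rows_series_lty eps :
  (\sum_(1 <= n <oo)
      P [set w | exists m i j : nat, ((1 <= m)%N /\ m%:R <= q ^+ n /\
                   (1 <= i)%N /\ i%:R <= c * m%:R /\
                   (1 <= j)%N /\ j%:R <= c * m%:R /\ i != j /\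
                   eps * a (Num.truncn (q ^+ n)) <= `|U m i w * V m j w|)%R ] < +oo)%E <->
  psum_bounded (fun n => prob (exceed_rows eps n)).
Proof.
rewrite -nneseries_lty_psum_bounded => [|n]; last exact: prob_ge0.
rewrite (eq_eseriesr (g := fun n => (prob (exceed_rows eps n))%:E)) // => n _.
rewrite -probE; last exact: measurable_exceed_rows.
congr (P _); apply/seteqP; split => w /=.
  move=> [m [i [j [m_gt0 [m_qn [i_gt0 [i_cm [j_gt0 [j_cm [ij aw]]]]]]]]]].
  exists m; first by rewrite /= mem_iota add1n ltnS leq_floor_pow // m_gt0.
  by exists i, j; rewrite !mem_iota !add1n !ltnS !leq_floor_mul // i_cm j_cm i_gt0 j_gt0.
move=> [m]; rewrite /= mem_iota add1n ltnS leq_floor_pow // => /andP[? ?] [i [j]].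
rewrite !mem_iota !add1n !ltnS !leq_floor_mul // => -[/andP[? ?] /andP[? ?] ij aw].
by exists m, i, j.
Qed.

End rows.

End scaled_sums.

End iid_array.

Theorem lemma3p1 (d : measure_display) (T : measurableType d) (R : realType)
  (P : probability T R) (U V : nat -> nat -> T -> R) (a : nat -> R) :
  iid_array P U V ->
  (forall n, (0 < n)%N -> 0 < a n) ->
  (forall n, (0 < n)%N -> a n <= a n.+1) ->
  (a n.+1 / a n) @[n --> \oo] --> (1 : R) ->
  (1 < limn_einf (fun n => (a n.*2 / a n)%:E))%E ->
  forall (c q : R), 0 < c -> 1 < q ->
  let S1 := (\sum_(1 <= n <oo)
      P [set w | exists i j : nat, ((1 <= i <= n)%N /\ (1 <= j <= n)%N /\ i != j /\
                   a n <= `|U 1%N i w * V 1%N j w|)%R ] < +oo)%E in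
  let S2 := forall eps : R, 0 < eps -> (\sum_(1 <= n <oo)
      P [set w | exists i j : nat, ((1 <= i)%N /\ i%:R <= c * n%:R /\
                   (1 <= j)%N /\ j%:R <= c * n%:R /\ i != j /\
                   eps * a n <= `|U 1%N i w * V 1%N j w|)%R ] < +oo)%E in
  let S3 := forall eps : R, 0 < eps -> (\sum_(1 <= n <oo)
      P [set w | exists m i j : nat, ((1 <= m)%N /\ m%:R <= q ^+ n /\
                   (1 <= i)%N /\ i%:R <= c * m%:R /\
                   (1 <= j)%N /\ j%:R <= c * m%:R /\ i != j /\
                   eps * a (Num.truncn (q ^+ n)) <= `|U m i w * V m j w|)%R ]
      < +oo)%E in
  (S1 <-> S2) /\ (S2 <-> S3).
Proof.
move=> iidUV a_gt0 a_nondecr _ liminf_gt1 c q c_gt0 q_gt1 S1 S2 S3.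
have scaledE := scaled_series_lty P U V iidUV a c c_gt0.
have rowsE := rows_series_lty P U V iidUV a c c_gt0 q q_gt1.
have scaled_rows := scaled_sums_iff_rows_sums P U V iidUV a c a_nondecr c_gt0 q q_gt1.
rewrite /S1 /S2 /S3 diag_series_lty //.
rewrite (diag_sums_iff_scaled_sums P U V iidUV a c a_gt0 a_nondecr c_gt0 liminf_gt1).
split; split=> sums eps eps_gt0.
- by apply/scaledE; apply: sums.
- by apply/scaledE; apply: sums.
- by apply/rowsE/scaled_rows => //; apply/scaledE; apply: sums.
- by apply/scaledE/(scaled_rows _ eps_gt0)/rowsE; apply: sums.
Qed.
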